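(* A metric space $(X,d_X)$ is coarse Lipschitz embeddable into $c_0(\kappa)$ for some cardinality $\kappa$ if and only if there are $C,D\in[0,\infty)$ such that $\Delta_X^{(c)}(R)\leq CR+D$ for all $R\in[0,\infty)$. A metric space $(X,d_X)$ is bi-Lipschitz embeddable into $c_0(\kappa)$ for some cardinality $\kappa$ if and only if there is $C\in[0,\infty)$ such that $\Delta_X^{(c)}(R)\leq CR$ for all $R\in[0,\infty)$.
   Context: For a cardinal $\kappa$, $c_0(\kappa)$ is the space of real families $(x_\xi)_{\xi<\kappa}$ such that $\{\xi: |x_\xi|>\eta\}$ is finite for every $\eta>0$, with the sup norm. For a cover $\mathcal{U}$ of $X$: $\mathrm{diam}(\mathcal{U})=\sup_{U\in\mathcal{U}}\mathrm{diam}(U)$; $\mathcal{L}(\mathcal{U})=\sup\{d\in[0,\infty): \text{every } E\subseteq X \text{ with } \mathrm{diam}(E)<d \text{ is contained in some } U\in\mathcal{U}\}$; $\mathcal{U}$ is point-finite if each point lies in only finitely many members. $\Delta_X^{(c)}(R)=\inf\{\mathrm{diam}(\mathcal{U}): \mathcal{U} \text{ a point-finite cover of } X,\ \mathcal{L}(\mathcal{U})\geq R\}$ (infimum of the empty set is $\infty$). For $f\colon X\to Y$, $\omega_f(t)=\sup\{d_Y(f(x_1),f(x_2)): d_X(x_1,x_2)\leq t\}$, $\rho_f(t)=\inf\{d_Y(f(x_1),f(x_2)): d_X(x_1,x_2)\geq t\}$. $f$ is a coarse Lipschitz embedding if there exist $A\geq1$, $B\geq0$ with $\omega_f(t)\leq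 At+B$ and $\rho_f(t)\geq t/A-B$ for all $t$; it is a bi-Lipschitz embedding if moreover one can take $B=0$. *)

From Stdlib Require Import Reals List.
From Coquelicot Require Import Coquelicot.
Open Scope R_scope.

Definition is_metric {X : Type} (d : X -> X -> R) : Prop :=
  (forall x y, 0 <= d x y) /\
  (forall x y, d x y = 0 <-> x = y) /\
  (forall x y, d x y = d y x) /\
  (forall x y z, d x z <= d x y + d y z).

(* diam(E) = sup { d(x,y) : x,y in E }  (in [-oo, +oo]; -oo for E empty) *)
Definition diam {X : Type} (d : X -> X -> R) (E : X -> Prop) : Rbar :=
  Rbar_lub (fun s => exists x y, E x /\ E y /\ s = Finite (d x y)).

Definition is_cover {X : Type} (U : (X -> Prop) -> Prop) : Prop :=
  forall x, exists V, U V /\ V x.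

Definition point_finite {X : Type} (U : (X -> Prop) -> Prop) : Prop :=
  forall x, exists l : list (X -> Prop), forall V, U V -> V x -> In V l.

Definition cover_diam {X : Type} (d : X -> X -> R) (U : (X -> Prop) -> Prop) : Rbar :=
  Rbar_lub (fun s => exists V, U V /\ s = diam d V).

Definition lebesgue {X : Type} (d : X -> X -> R) (U : (X -> Prop) -> Prop) : Rbar :=
  Rbar_lub (fun s => exists r : R, s = Finite r /\ 0 <= r /\
    forall E : X -> Prop, Rbar_lt (diam d E) (Finite r) ->
      exists V, U V /\ forall x, E x -> V x).

(* Delta_X^{(c)}(R) = inf { diam U : U point-finite cover, L(U) >= R } (inf of empty = +oo) *)
Definition Delta_c {X : Type} (d : X -> X -> R) (R0 : R) : Rbar :=
  Rbar_glb (fun s => exists U : (X -> Prop) -> Prop,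
    is_cover U /\ point_finite U /\ Rbar_le (Finite R0) (lebesgue d U) /\
    s = cover_diam d U).

Definition in_c0 {I : Type} (x : I -> R) : Prop :=
  forall eta : R, 0 < eta ->
    exists l : list I, forall i, Rabs (x i) > eta -> In i l.

(* sup-norm distance on c_0(I) (the 0 accounts for I empty; all terms are >= 0) *)
Definition c0_dist {I : Type} (u v : I -> R) : Rbar :=
  Rbar_lub (fun s => s = Finite 0 \/ exists i, s = Finite (Rabs (u i - v i))).

Definition omega_f {X I : Type} (d : X -> X -> R) (f : X -> I -> R) (t : R) : Rbar :=
  Rbar_lub (fun s => exists x1 x2, d x1 x2 <= t /\ s = c0_dist (f x1) (f x2)).

Definition rho_f {X I : Type} (d : X -> X -> R) (f : X -> I -> R) (t : R) : Rbar :=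
  Rbar_glb (fun s => exists x1 x2, d x1 x2 >= t /\ s = c0_dist (f x1) (f x2)).

Definition coarse_lipschitz_embedding {X I : Type} (d : X -> X -> R) (f : X -> I -> R) : Prop :=
  (forall x, in_c0 (f x)) /\
  exists A B : R, 1 <= A /\ 0 <= B /\
    forall t : R, Rbar_le (omega_f d f t) (Finite (A * t + B)) /\
                  Rbar_le (Finite (t / A - B)) (rho_f d f t).

Definition bilipschitz_embedding {X I : Type} (d : X -> X -> R) (f : X -> I -> R) : Prop :=
  (forall x, in_c0 (f x)) /\
  exists A : R, 1 <= A /\
    forall t : R, Rbar_le (omega_f d f t) (Finite (A * t)) /\
                  Rbar_le (Finite (t / A)) (rho_f d f t).

From Stdlib Require Import Reals List Lra Lia Classical ClassicalEpsilon FunctionalExtensionality.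
From Coquelicot Require Import Coquelicot.
Open Scope R_scope.

(* Embedding => covers: pull back to X the cubes of radius 3L around the points of the
   lattice 4L.Z^(I) of c_0(I), where L > A R + B bounds the coordinatewise oscillation of f
   on sets of diameter < R.  Rounding to the nearest lattice point puts each such set into a
   single cube, a point of c_0 lies in finitely many cubes, and the lower modulus of f bounds
   the diameter of the pulled-back cubes by A (6L + B).
   Covers => embedding: for every scale 2^n pick a point-finite cover U_n with Lebesgue
   number >= 2^n and mesh < C 2^n + D, and take the coordinates, indexed by (n, V in U_n),
   x |-> min (dist(x, X \ V), 2^n, (d(x0, x) - 2^n)^+).  They are 1-Lipschitz, lie in c_0
   by point-finiteness and the cut-off at d(x0, x), and when 2^n ~ d(x, y)/(C + 4) the
   member of U_n containing the ball B(x, 2^n/4) misses y, which separates x from y. *)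

Lemma Rbar_lub_ub (E : Rbar -> Prop) (x : Rbar) : E x -> Rbar_le x (Rbar_lub E).
Proof. exact (proj1 (proj2_sig (Rbar_ex_lub E)) x). Qed.

Lemma Rbar_lub_le (E : Rbar -> Prop) (b : Rbar) :
  (forall x, E x -> Rbar_le x b) -> Rbar_le (Rbar_lub E) b.
Proof. exact (proj2 (proj2_sig (Rbar_ex_lub E)) b). Qed.

Lemma Rbar_glb_lb (E : Rbar -> Prop) (x : Rbar) : E x -> Rbar_le (Rbar_glb E) x.
Proof. exact (proj1 (proj2_sig (Rbar_ex_glb E)) x). Qed.

Lemma Rbar_glb_ge (E : Rbar -> Prop) (b : Rbar) :
  (forall x, E x -> Rbar_le b x) -> Rbar_le b (Rbar_glb E).
Proof. exact (proj2 (proj2_sig (Rbar_ex_glb E)) b). Qed.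

Lemma Rbar_le_of_forall_pos (x : Rbar) (a : R) :
  (forall e, 0 < e -> Rbar_le x (a + e)) -> Rbar_le x a.
Proof.
  intros H. destruct x as [r| |]; simpl; auto.
  - apply Rnot_lt_le. intros Har. specialize (H ((r - a) / 2) ltac:(lra)). simpl in H. lra.
  - exact (H 1 Rlt_0_1).
Qed.

Lemma Rabs_sub_le_c0_dist {I : Type} (u v : I -> R) (i : I) :
  Rbar_le (Rabs (u i - v i)) (c0_dist u v).
Proof. apply Rbar_lub_ub. right. eauto. Qed.

Lemma c0_dist_ge0 {I : Type} (u v : I -> R) : Rbar_le 0 (c0_dist u v).
Proof. apply Rbar_lub_ub. now left. Qed.

Lemma c0_dist_le {I : Type} (u v : I -> R) (b : R) :
  0 <= b -> (forall i, Rabs (u i - v i) <= b) -> Rbar_le (c0_dist u v) b.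
Proof. intros Hb H. apply Rbar_lub_le. intros s [->|[i ->]]; simpl; auto. Qed.

Lemma le_diam {X : Type} (d : X -> X -> R) (E : X -> Prop) (x y : X) :
  E x -> E y -> Rbar_le (d x y) (diam d E).
Proof. intros Hx Hy. apply Rbar_lub_ub. eauto. Qed.

Lemma diam_le {X : Type} (d : X -> X -> R) (E : X -> Prop) (b : R) :
  (forall x y, E x -> E y -> d x y <= b) -> Rbar_le (diam d E) b.
Proof. intros H. apply Rbar_lub_le. intros s (x & y & Hx & Hy & ->). simpl. auto. Qed.

Lemma Z_between_finite (a b : R) :
  exists s : list Z, forall n, a <= IZR n <= b -> In n s.
Proof.
  set (m := Int_part a). set (M := up b).
  exists (map (fun j => (m + Z.of_nat j)%Z) (seq 0 (Z.to_nat (M - m)))).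
  intros n [Han Hnb].
  destruct (base_Int_part a) as [Hm _]. destruct (archimed b) as [HM _].
  fold m in Hm. fold M in HM.
  assert (m <= n)%Z by (apply le_IZR; lra).
  assert (n < M)%Z by (apply lt_IZR; lra).
  apply in_map_iff. exists (Z.to_nat (n - m)). split; [lia | apply in_seq; lia].
Qed.

Lemma finite_union_of_finite {A B : Type} (l : list A) (P : A -> B -> Prop) :
  (forall a, exists s, forall b, P a b -> In b s) ->
  exists s, forall a b, In a l -> P a b -> In (a, b) s.
Proof.
  intros Hfin. induction l as [|a l IH].
  - exists nil. intros a b [].
  - destruct IH as [s Hs]. destruct (Hfin a) as [sa Hsa].
    exists (map (pair a) sa ++ s). intros a' b [<-|Ha'] Hab; apply in_or_app.
    + left. apply in_map. auto.
    + right. auto.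
Qed.

Definition fun_upd {I T : Type} (k : I -> T) (a : I) (v : T) : I -> T :=
  fun i => if excluded_middle_informative (i = a) then v else k i.

Lemma finite_funs_supported {I T : Type} (t0 : T) (l : list I) (P : I -> T -> Prop) :
  (forall i, exists s, forall v, P i v -> In v s) ->
  exists L, forall k : I -> T,
    (forall i, ~ In i l -> k i = t0) -> (forall i, In i l -> P i (k i)) -> In k L.
Proof.
  intros Hfin. induction l as [|a l IH].
  - exists ((fun _ => t0) :: nil). intros k Hout _. left.
    apply functional_extensionality. intros i. symmetry. apply Hout. auto.
  - destruct IH as [L HL]. destruct (Hfin a) as [sa Hsa].
    exists (L ++ flat_map (fun k' => map (fun_upd k' a) sa) L). intros k Hout Hin.
    apply in_or_app. destruct (classic (In a l)) as [Hal|Hal].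
    { left. apply HL; [|intros i Hi; apply Hin; simpl; auto].
      intros i Hi. apply Hout. intros [->|]; auto. }
    right. apply in_flat_map. exists (fun_upd k a t0). split.
    + apply HL; intros i Hi; unfold fun_upd.
      * destruct (excluded_middle_informative (i = a)) as [_|Hia]; [reflexivity|].
        apply Hout. intros [->|]; auto.
      * destruct (excluded_middle_informative (i = a)) as [->|_]; [contradiction|].
        apply Hin. simpl. auto.
    + apply in_map_iff. exists (k a). split.
      * apply functional_extensionality. intros i. unfold fun_upd.
        destruct (excluded_middle_informative (i = a)); congruence.
      * apply Hsa, Hin. simpl. auto.
Qed.

Definition Znearest (t : R) : Z := Int_part (t + / 2).

Lemma Rabs_sub_Znearest (t : R) : Rabs (t - IZR (Znearest t)) <= / 2.
Proof.
  unfold Znearest. destruct (base_Int_part (t + / 2)) as [H1 H2].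
  apply Rabs_le. lra.
Qed.

Lemma Rabs_sub_mult_Znearest (h t : R) : 0 < h ->
  Rabs (t - h * IZR (Znearest (t / h))) <= h / 2.
Proof.
  intros Hh. replace (t - h * IZR (Znearest (t / h))) with (h * (t / h - IZR (Znearest (t / h))))
    by (field; lra).
  rewrite Rabs_mult, Rabs_pos_eq by lra.
  pose proof (Rabs_sub_Znearest (t / h)). nra.
Qed.

Lemma Delta_c_le_of_cover {X : Type} (d : X -> X -> R) (U : (X -> Prop) -> Prop) (R0 M : R) :
  0 <= R0 -> is_cover U -> point_finite U ->
  (forall E, Rbar_lt (diam d E) R0 -> exists V, U V /\ forall x, E x -> V x) ->
  (forall V x y, U V -> V x -> V y -> d x y <= M) ->
  Rbar_le (Delta_c d R0) M.
Proof.
  intros HR0 Hcov Hpf Hleb Hmesh.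
  apply Rbar_le_trans with (cover_diam d U).
  - apply Rbar_glb_lb. exists U. repeat split; auto.
    apply Rbar_lub_ub. exists R0. auto.
  - apply Rbar_lub_le. intros s (V & HV & ->). apply diam_le. eauto.
Qed.

Section LatticeCubes.

Variables (X I : Type) (f : X -> I -> R) (h r : R).
Hypothesis h_pos : 0 < h.

Definition lattice_cube (k : I -> Z) (x : X) : Prop :=
  forall i, Rabs (f x i - h * IZR (k i)) <= r.

Definition lattice_cubes (V : X -> Prop) : Prop := exists k, V = lattice_cube k.

Lemma lattice_cube_Rabs_sub_le k x y :
  lattice_cube k x -> lattice_cube k y -> forall i, Rabs (f x i - f y i) <= 2 * r.
Proof.
  intros Hx Hy i. specialize (Hx i). specialize (Hy i).
  rewrite Rabs_minus_sym in Hy.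
  replace (f x i - f y i) with ((f x i - h * IZR (k i)) + (h * IZR (k i) - f y i)) by ring.
  eapply Rle_trans; [apply Rabs_triang | lra].
Qed.

Definition nearest_vertex (e : X) (i : I) : Z := Znearest (f e i / h).

Lemma lattice_cube_nearest_vertex (e x : X) (L : R) : h / 2 + L <= r ->
  (forall i, Rabs (f x i - f e i) <= L) -> lattice_cube (nearest_vertex e) x.
Proof.
  intros HhL Hxe i. pose proof (Rabs_sub_mult_Znearest h (f e i) h_pos).
  specialize (Hxe i). unfold nearest_vertex.
  replace (f x i - _) with ((f x i - f e i) + (f e i - h * IZR (Znearest (f e i / h)))) by ring.
  eapply Rle_trans; [apply Rabs_triang | lra].
Qed.

Lemma lattice_cubes_cover : h / 2 <= r -> is_cover lattice_cubes.
Proof.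
  intros Hhr x. exists (lattice_cube (nearest_vertex x)). split; [eexists; reflexivity|].
  apply lattice_cube_nearest_vertex with 0; [lra|]. intros i.
  rewrite Rminus_diag, Rabs_R0. lra.
Qed.

(* A cube containing x has vertex coordinate 0 wherever |f x i| <= (h - r)/2, that is,
   outside a finite set of coordinates since f x is in c_0. *)
Lemma lattice_cubes_point_finite : r < h -> (forall x, in_c0 (f x)) -> point_finite lattice_cubes.
Proof.
  intros Hrh Hc0 x. destruct (Hc0 x ((h - r) / 2) ltac:(lra)) as [l Hl].
  destruct (finite_funs_supported 0%Z l
              (fun i v => Rabs (f x i - h * IZR v) <= r)) as [L HL].
  { intros i. destruct (Z_between_finite ((f x i - r) / h) ((f x i + r) / h)) as [s Hs].
    exists s. intros v Hv. apply Hs. apply Rabs_le_between in Hv.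
    split; [apply Rle_div_l | apply Rle_div_r]; lra. }
  exists (map lattice_cube L). intros V [k ->] Hk. apply in_map. apply HL; [|auto].
  intros i Hi. specialize (Hk i).
  assert (Hfx : Rabs (f x i) <= (h - r) / 2).
  { apply Rnot_lt_le. intros Hlt. apply Hi, Hl. exact Hlt. }
  assert (Hkh : h * Rabs (IZR (k i)) < h * 1).
  { rewrite <- (Rabs_pos_eq h) at 1 by lra. rewrite <- Rabs_mult.
    pose proof (Rabs_triang_inv (h * IZR (k i)) (f x i)).
    rewrite Rabs_minus_sym in Hk. lra. }
  apply Rmult_lt_reg_l in Hkh; [|lra].
  rewrite <- abs_IZR in Hkh. apply lt_IZR in Hkh. lia.
Qed.

End LatticeCubes.

Lemma Delta_c_le_of_map {X I : Type} (d : X -> X -> R) (f : X -> I -> R) (R0 L M : R) :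
  0 <= R0 -> 0 < L -> (forall x, in_c0 (f x)) ->
  (forall x y i, d x y < R0 -> Rabs (f x i - f y i) <= L) ->
  (forall x y, (forall i, Rabs (f x i - f y i) <= 6 * L) -> d x y <= M) ->
  Rbar_le (Delta_c d R0) M.
Proof.
  intros HR0 HL Hc0 Hsmall Hlarge.
  set (cube := lattice_cube X I f (4 * L) (3 * L)).
  apply (Delta_c_le_of_cover d (lattice_cubes X I f (4 * L) (3 * L))); auto.
  - apply lattice_cubes_cover; lra.
  - apply lattice_cubes_point_finite; auto; lra.
  - intros E HE. destruct (classic (exists e, E e)) as [[e He]|HE0].
    + exists (cube (nearest_vertex X I f (4 * L) e)). split; [eexists; reflexivity|].
      intros x Hx. apply lattice_cube_nearest_vertex with L; [lra|lra|].
      intros i. apply Hsmall. exact (Rbar_le_lt_trans _ _ _ (le_diam d E x e Hx He) HE).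
    + exists (cube (fun _ => 0%Z)). split; [eexists; reflexivity|].
      intros x Hx. exfalso. eauto.
  - intros V x y [k ->] Hx Hy. apply Hlarge. intros i.
    replace (6 * L) with (2 * (3 * L)) by ring. eapply lattice_cube_Rabs_sub_le; eauto.
Qed.

Definition has_moduli {X I : Type} (d : X -> X -> R) (f : X -> I -> R) (A B : R) : Prop :=
  forall t, Rbar_le (omega_f d f t) (A * t + B) /\ Rbar_le (t / A - B) (rho_f d f t).

Lemma Delta_c_le_of_moduli {X I : Type} (d : X -> X -> R) (f : X -> I -> R) (A B : R) :
  1 <= A -> 0 <= B -> (forall x, in_c0 (f x)) -> has_moduli d f A B ->
  forall R0, 0 <= R0 -> Rbar_le (Delta_c d R0) (6 * A * A * R0 + 7 * A * B).
Proof.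
  intros HA HB Hc0 Hf R0 HR0. apply Rbar_le_of_forall_pos. intros e He.
  (* the slack e keeps L > 0 also when A R0 + B = 0 *)
  set (L := A * R0 + B + e / (6 * A)).
  assert (HeA : 0 < e / (6 * A)) by (apply Rdiv_lt_0_compat; lra).
  apply (Delta_c_le_of_map d f R0 L); auto.
  - unfold L. nra.
  - intros x y i Hxy.
    assert (H : Rbar_le (Rabs (f x i - f y i)) (A * R0 + B)).
    { eapply Rbar_le_trans; [apply Rabs_sub_le_c0_dist|].
      eapply Rbar_le_trans; [|apply (proj1 (Hf R0))].
      apply Rbar_lub_ub. exists x, y. split; [lra|reflexivity]. }
    simpl in H. unfold L. lra.
  - intros x y Hxy.
    assert (H : Rbar_le (d x y / A - B) (6 * L)).
    { eapply Rbar_le_trans; [apply (proj2 (Hf (d x y)))|].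
      eapply Rbar_le_trans; [apply Rbar_glb_lb; exists x, y; split; [lra|reflexivity]|].
      apply c0_dist_le; auto. unfold L. nra. }
    simpl in H. unfold L in H.
    assert (Hdxy : d x y = A * (d x y / A)) by (field; lra).
    assert (He6 : 6 * A * (e / (6 * A)) = e) by (field; lra).
    nra.
Qed.

Definition dyadic (n : Z) : R := Rpower 2 (IZR n).

Lemma dyadic_pos (n : Z) : 0 < dyadic n.
Proof. apply exp_pos. Qed.

Lemma ln_dyadic (n : Z) : ln (dyadic n) = IZR n * ln 2.
Proof. apply ln_Rpower. Qed.

Lemma ln2_pos : 0 < ln 2.
Proof. rewrite <- ln_1. apply ln_increasing; lra. Qed.

Lemma dyadic_bracket (u : R) : 0 < u -> exists n, dyadic n <= u < 2 * dyadic n.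
Proof.
  intros Hu. set (q := ln u / ln 2).
  assert (Hq : Rpower 2 q = u).
  { unfold Rpower, q.
    replace (ln u / ln 2 * ln 2) with (ln u) by (field; apply Rgt_not_eq, ln2_pos).
    apply exp_ln, Hu. }
  destruct (base_Int_part q) as [H1 H2]. exists (Int_part q). split.
  - rewrite <- Hq. apply Rle_Rpower; lra.
  - rewrite <- Hq. unfold dyadic. rewrite <- (Rpower_1 2) at 2 by lra.
    rewrite <- Rpower_plus. apply Rpower_lt; lra.
Qed.

Lemma dyadic_window_finite (a b : R) : 0 < a ->
  exists s : list Z, forall n, a < dyadic n -> dyadic n < b -> In n s.
Proof.
  intros Ha. destruct (Z_between_finite (ln a / ln 2) (ln b / ln 2)) as [s Hs].
  exists s. intros n Han Hnb. pose proof ln2_pos. pose proof (dyadic_pos n).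
  apply Hs. split.
  - apply Rle_div_l; [lra|]. rewrite <- ln_dyadic. left. apply ln_increasing; lra.
  - apply Rle_div_r; [lra|]. rewrite <- ln_dyadic. left. apply ln_increasing; lra.
Qed.

Lemma Rabs_sub_Rmin_Rmax0_le (a a' b b' e : R) :
  Rabs (a - a') <= e -> Rabs (b - b') <= e ->
  Rabs (Rmin a (Rmax 0 b) - Rmin a' (Rmax 0 b')) <= e.
Proof.
  intros Ha Hb. apply Rabs_le_between in Ha, Hb.
  unfold Rmin, Rmax. repeat destruct Rle_dec; apply Rabs_le; lra.
Qed.

Section MetricSpace.

Variables (X : Type) (d : X -> X -> R).
Hypothesis Hd : is_metric d.

Lemma metric_ge0 x y : 0 <= d x y.
Proof. apply Hd. Qed.

Lemma metric_self x : d x x = 0.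
Proof. apply Hd. reflexivity. Qed.

Lemma metric_sym x y : d x y = d y x.
Proof. apply Hd. Qed.

Lemma metric_triangle x y z : d x z <= d x y + d y z.
Proof. apply Hd. Qed.

Lemma lebesgue_ball (U : (X -> Prop) -> Prop) (R0 : R) :
  0 < R0 -> Rbar_le R0 (lebesgue d U) ->
  forall x, exists V, U V /\ forall z, d x z < R0 / 4 -> V z.
Proof.
  intros HR0 Hleb x.
  destruct (classic (exists r, R0 / 2 < r /\ forall E, Rbar_lt (diam d E) r ->
                       exists V, U V /\ forall z, E z -> V z)) as [(r & Hr & HE)|Hno].
  - destruct (HE (fun z => d x z < R0 / 4)) as (V & HV & HEV); eauto.
    eapply Rbar_le_lt_trans; [apply (diam_le d _ (R0 / 2))|simpl; lra].
    intros z w Hz Hw. pose proof (metric_triangle z x w). rewrite (metric_sym z x) in *. lra.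
  - exfalso. assert (H : Rbar_le (lebesgue d U) (R0 / 2)).
    { apply Rbar_lub_le. intros s (r & -> & _ & Hr). simpl.
      apply Rnot_lt_le. intros Hlt. apply Hno. eauto. }
    pose proof (Rbar_le_trans _ _ _ Hleb H). simpl in *. lra.
Qed.

Lemma cover_of_Delta_c_lt (R0 v : R) : 0 < R0 -> Rbar_lt (Delta_c d R0) v ->
  exists U, point_finite U /\
    (forall x, exists V, U V /\ forall z, d x z < R0 / 4 -> V z) /\
    (forall V x y, U V -> V x -> V y -> d x y < v).
Proof.
  intros HR0 Hlt.
  destruct (classic (exists U, is_cover U /\ point_finite U /\
                       Rbar_le R0 (lebesgue d U) /\ Rbar_lt (cover_diam d U) v))
    as [(U & _ & Hpf & Hleb & Hdiam)|Hno].
  - exists U. split; [exact Hpf|split; [apply lebesgue_ball; auto|]].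
    intros V x y HV Hx Hy. apply (Rbar_le_lt_trans (d x y) (cover_diam d U) v); [|exact Hdiam].
    eapply Rbar_le_trans; [apply le_diam; eauto | apply Rbar_lub_ub; eauto].
  - exfalso. assert (H : Rbar_le v (Delta_c d R0)).
    { apply Rbar_glb_ge. intros s (U & HU & Hpf & Hleb & ->).
      apply Rbar_not_lt_le. intros Hs. apply Hno. eauto 6. }
    pose proof (Rbar_le_lt_trans _ _ _ H Hlt). simpl in *. lra.
Qed.

(* min(c, dist(x, X \ V)); the cap c keeps it finite when V = X. *)
Definition capped_dist_compl (c : R) (V : X -> Prop) (x : X) : R :=
  real (Rbar_glb (fun s => s = Finite c \/ exists y, ~ V y /\ s = Finite (d x y))).

Lemma capped_dist_compl_spec (c : R) (V : X -> Prop) (x : X) : 0 <= c ->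
  0 <= capped_dist_compl c V x <= c /\
  (forall y, ~ V y -> capped_dist_compl c V x <= d x y) /\
  (forall b, b <= c -> (forall y, ~ V y -> b <= d x y) -> b <= capped_dist_compl c V x).
Proof.
  intros Hc. unfold capped_dist_compl.
  set (S := fun s => s = Finite c \/ exists y, ~ V y /\ s = Finite (d x y)).
  assert (Hle_c : Rbar_le (Rbar_glb S) c) by (apply Rbar_glb_lb; now left).
  assert (Hge0 : Rbar_le 0 (Rbar_glb S)).
  { apply Rbar_glb_ge. intros s [->|(y & _ & ->)]; simpl; auto using metric_ge0. }
  assert (Hle_d : forall y, ~ V y -> Rbar_le (Rbar_glb S) (d x y)).
  { intros y Hy. apply Rbar_glb_lb. right. eauto. }
  assert (Hglb : forall b, b <= c -> (forall y, ~ V y -> b <= d x y) -> Rbar_le b (Rbar_glb S)).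
  { intros b Hb Hy. apply Rbar_glb_ge. intros s [->|(y & Hy' & ->)]; simpl; auto. }
  destruct (Rbar_glb S) as [g| |]; simpl in *; try contradiction. auto.
Qed.

Lemma capped_dist_compl_lipschitz (c : R) (V : X -> Prop) (x y : X) : 0 <= c ->
  capped_dist_compl c V y <= capped_dist_compl c V x + d x y.
Proof.
  intros Hc.
  destruct (capped_dist_compl_spec c V x Hc) as (_ & _ & Hx).
  destruct (capped_dist_compl_spec c V y Hc) as ((_ & Hyc) & Hy & _).
  cut (capped_dist_compl c V y - d x y <= capped_dist_compl c V x); [lra|].
  apply Hx; [pose proof (metric_ge0 x y); lra|].
  intros z Hz. specialize (Hy z Hz). pose proof (metric_triangle y x z).
  rewrite (metric_sym y x) in *. lra.
Qed.

Lemma capped_dist_compl_out (c : R) (V : X -> Prop) (x : X) : 0 <= c -> ~ V x ->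
  capped_dist_compl c V x = 0.
Proof.
  intros Hc Hx. destruct (capped_dist_compl_spec c V x Hc) as ((H0 & _) & Hle & _).
  specialize (Hle x Hx). rewrite metric_self in Hle. lra.
Qed.

Lemma capped_dist_compl_ball (c r : R) (V : X -> Prop) (x : X) : 0 <= c -> r <= c ->
  (forall z, d x z < r -> V z) -> r <= capped_dist_compl c V x.
Proof.
  intros Hc Hrc Hball. apply (capped_dist_compl_spec c V x Hc); auto.
  intros y Hy. apply Rnot_lt_le. intros Hlt. auto.
Qed.

Section ScaleCoordinates.

Variables (x0 : X) (U : Z -> (X -> Prop) -> Prop).

Definition scale_coord (x : X) (p : Z * (X -> Prop)) : R :=
  let '(n, V) := p in
  if excluded_middle_informative (U n V)
  then Rmin (capped_dist_compl (dyadic n) V x) (Rmax 0 (d x0 x - dyadic n))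
  else 0.

Lemma scale_coord_lipschitz (x y : X) (p : Z * (X -> Prop)) :
  Rabs (scale_coord x p - scale_coord y p) <= d x y.
Proof.
  destruct p as [n V]. simpl. destruct (excluded_middle_informative (U n V)).
  - pose proof (dyadic_pos n). apply Rabs_sub_Rmin_Rmax0_le; apply Rabs_le_between; split.
    + pose proof (capped_dist_compl_lipschitz (dyadic n) V x y). lra.
    + pose proof (capped_dist_compl_lipschitz (dyadic n) V y x).
      rewrite (metric_sym y x) in *. lra.
    + pose proof (metric_triangle x0 x y). lra.
    + pose proof (metric_triangle x0 y x). rewrite (metric_sym y x) in *. lra.
  - rewrite Rminus_0_r, Rabs_R0. apply metric_ge0.
Qed.

Lemma scale_coord_ge0 (x : X) (p : Z * (X -> Prop)) : 0 <= scale_coord x p.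
Proof.
  destruct p as [n V]. simpl. destruct (excluded_middle_informative (U n V)); [|lra].
  pose proof (dyadic_pos n).
  destruct (capped_dist_compl_spec (dyadic n) V x ltac:(lra)) as ((H0 & _) & _).
  apply Rmin_glb; [exact H0 | apply Rmax_l].
Qed.

(* A coordinate (n, V) can exceed eta only if eta < 2^n < d(x0, x) and x lies in V. *)
Lemma scale_coord_c0 : (forall n, point_finite (U n)) -> forall x, in_c0 (scale_coord x).
Proof.
  intros Hpf x eta Heta.
  destruct (dyadic_window_finite eta (d x0 x) Heta) as [ns Hns].
  destruct (finite_union_of_finite ns (fun n V => U n V /\ V x)) as [s Hs].
  { intros n. destruct (Hpf n x) as [l Hl]. exists l. intros V [HV Hx]. auto. }
  exists s. intros [n V] Hp. pose proof (scale_coord_ge0 x (n, V)).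
  rewrite Rabs_pos_eq in Hp by lra. simpl in Hp.
  destruct (excluded_middle_informative (U n V)) as [HV|]; [|lra].
  pose proof (dyadic_pos n).
  destruct (capped_dist_compl_spec (dyadic n) V x ltac:(lra)) as ((_ & Hcap) & _).
  pose proof (Rmin_l (capped_dist_compl (dyadic n) V x) (Rmax 0 (d x0 x - dyadic n))).
  pose proof (Rmin_r (capped_dist_compl (dyadic n) V x) (Rmax 0 (d x0 x - dyadic n))).
  assert (Hx : V x).
  { apply NNPP. intros Hx. rewrite (capped_dist_compl_out (dyadic n) V x) in *; auto; lra. }
  apply Hs; auto. apply Hns; [lra|].
  unfold Rmax in *. destruct Rle_dec; lra.
Qed.

(* With 2^n <= d(x, y)/(C + 4) < 2^(n+1), the member V of U n containing the ball
   B(x, 2^n/4) is too small to contain y, so coordinate (n, V) is >= 2^n/4 at x and 0 at y. *)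
Lemma scale_coord_separates (C D : R) : 0 <= C -> 0 <= D ->
  (forall n x, exists V, U n V /\ forall z, d x z < dyadic n / 4 -> V z) ->
  (forall n V x y, U n V -> V x -> V y -> d x y < C * dyadic n + D) ->
  forall x y, d x0 y <= d x0 x -> 0 < d x y -> (C + 4) * D / 2 <= d x y ->
  exists p, d x y / (8 * (C + 4)) <= scale_coord x p - scale_coord y p.
Proof.
  intros HC HD Hball Hmesh x y Hxy Hpos Hlarge.
  set (u := d x y / (C + 4)).
  assert (Ht : d x y = (C + 4) * u) by (unfold u; field; lra).
  assert (Hu : 0 < u) by (unfold u; apply Rdiv_lt_0_compat; lra).
  destruct (dyadic_bracket u Hu) as [n [Hnu Hun]].
  pose proof (dyadic_pos n).
  destruct (Hball n x) as (V & HV & HBV).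
  exists (n, V).
  assert (HDu : D <= 2 * u) by (apply Rmult_le_reg_l with (C + 4); lra).
  assert (Hy : ~ V y).
  { intros Hy. assert (Hmn : C * dyadic n <= C * u) by (apply Rmult_le_compat_l; lra).
    pose proof (Hmesh n V x y HV (HBV x ltac:(rewrite metric_self; lra)) Hy). lra. }
  assert (Hcx : dyadic n / 4 <= capped_dist_compl (dyadic n) V x)
    by (apply capped_dist_compl_ball; auto; lra).
  assert (Hx0 : 2 * dyadic n <= d x0 x).
  { pose proof (metric_triangle x x0 y). rewrite (metric_sym x x0) in *. nra. }
  simpl. destruct (excluded_middle_informative (U n V)) as [_|]; [|contradiction].
  rewrite (capped_dist_compl_out (dyadic n) V y) by (auto; lra).
  assert (Hfx : dyadic n / 4 <=
                Rmin (capped_dist_compl (dyadic n) V x) (Rmax 0 (d x0 x - dyadic n))).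
  { apply Rmin_glb; [exact Hcx|]. eapply Rle_trans; [|apply Rmax_r]. lra. }
  pose proof (Rmin_l 0 (Rmax 0 (d x0 y - dyadic n))).
  assert (d x y / (8 * (C + 4)) = u / 8) by (unfold u; field; lra).
  lra.
Qed.

End ScaleCoordinates.

Lemma has_moduli_of_coords {I : Type} (f : X -> I -> R) (A B : R) : 1 <= A -> 0 <= B ->
  (forall x y i, Rabs (f x i - f y i) <= d x y) ->
  (forall x y, d x y / A - B <= 0 \/ exists i, d x y / A - B <= Rabs (f x i - f y i)) ->
  has_moduli d f A B.
Proof.
  intros HA HB Hlip Hlow t. split.
  - apply Rbar_lub_le. intros s (x & y & Hxy & ->). pose proof (metric_ge0 x y).
    apply c0_dist_le; [nra|]. intros i. specialize (Hlip x y i). nra.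
  - apply Rbar_glb_ge. intros s (x & y & Hxy & ->).
    assert (Ht : t / A <= d x y / A).
    { apply Rmult_le_compat_r; [left; apply Rinv_0_lt_compat|]; lra. }
    destruct (Hlow x y) as [H0|[i Hi]].
    + eapply Rbar_le_trans; [|apply c0_dist_ge0]. simpl. lra.
    + eapply Rbar_le_trans; [|apply (Rabs_sub_le_c0_dist _ _ i)]. simpl. lra.
Qed.

Lemma embedding_of_Delta_c_lt (C D : R) : 0 <= C -> 0 <= D ->
  (forall R0, 0 < R0 -> Rbar_lt (Delta_c d R0) (C * R0 + D)) ->
  exists (I : Type) (f : X -> I -> R),
    (forall x, in_c0 (f x)) /\ has_moduli d f (8 * (C + 4)) D.
Proof.
  intros HC HD HDelta.
  destruct (classic (inhabited X)) as [[x0]|Hempty].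
  2:{ exists unit, (fun _ _ => 0).
      split; [|apply has_moduli_of_coords; try lra];
        intros x; exfalso; exact (Hempty (inhabits x)). }
  destruct (choice (fun n U => point_finite U /\
      (forall x, exists V, U V /\ forall z, d x z < dyadic n / 4 -> V z) /\
      (forall V x y, U V -> V x -> V y -> d x y < C * dyadic n + D))) as [U HU].
  { intros n. apply cover_of_Delta_c_lt; [apply dyadic_pos | apply HDelta, dyadic_pos]. }
  assert (Hsep := scale_coord_separates x0 U C D HC HD (fun n => proj1 (proj2 (HU n)))
                    (fun n => proj2 (proj2 (HU n)))).
  exists (Z * (X -> Prop))%type, (scale_coord x0 U). split.
  - apply scale_coord_c0. intros n. apply HU.
  - apply has_moduli_of_coords; [lra | exact HD | apply scale_coord_lipschitz |].
    intros x y. destruct (Rle_lt_dec (d x y / (8 * (C + 4)) - D) 0) as [Hle|Hgt];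
      [now left | right].
    assert (Hlarge : 8 * (C + 4) * D < d x y).
    { assert (d x y = 8 * (C + 4) * (d x y / (8 * (C + 4)))) by (field; lra). nra. }
    assert (Hpos : 0 < d x y) by nra.
    destruct (Rle_lt_dec (d x0 y) (d x0 x)) as [Hxy|Hyx].
    + destruct (Hsep x y Hxy Hpos ltac:(nra)) as [p Hp].
      exists p. rewrite Rabs_pos_eq; lra.
    + rewrite (metric_sym x y) in *.
      destruct (Hsep y x ltac:(lra) Hpos ltac:(nra)) as [p Hp].
      exists p. rewrite Rabs_minus_sym, Rabs_pos_eq; lra.
Qed.

End MetricSpace.

Lemma bilipschitz_embedding_iff {X I : Type} (d : X -> X -> R) (f : X -> I -> R) :
  bilipschitz_embedding d f <->
  (forall x, in_c0 (f x)) /\ exists A, 1 <= A /\ has_moduli d f A 0.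
Proof.
  unfold bilipschitz_embedding, has_moduli.
  split; intros [Hc0 (A & HA & Hf)]; split; auto; exists A; split; auto;
    intros t; destruct (Hf t); rewrite ?Rplus_0_r, ?Rminus_0_r in *; auto.
Qed.

Theorem corollary3p13 (X : Type) (d : X -> X -> R) (Hd : is_metric d) :
  ((exists (I : Type) (f : X -> I -> R), coarse_lipschitz_embedding d f) <->
   (exists C D : R, 0 <= C /\ 0 <= D /\
      forall R0 : R, 0 <= R0 -> Rbar_le (Delta_c d R0) (Finite (C * R0 + D))))
  /\
  ((exists (I : Type) (f : X -> I -> R), bilipschitz_embedding d f) <->
   (exists C : R, 0 <= C /\
      forall R0 : R, 0 <= R0 -> Rbar_le (Delta_c d R0) (Finite (C * R0)))).
Proof.
  split; split.
  - intros (I & f & Hc0 & A & B & HA & HB & Hf).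
    exists (6 * A * A), (7 * A * B). split; [nra | split; [nra|]].
    exact (Delta_c_le_of_moduli d f A B HA HB Hc0 Hf).
  - intros (C & D & HC & HD & HDelta).
    destruct (embedding_of_Delta_c_lt X d Hd C (D + 1)) as (I & f & Hc0 & Hf); try lra.
    { intros R0 HR0. eapply Rbar_le_lt_trans; [apply HDelta; lra | simpl; lra]. }
    exists I, f. split; [exact Hc0|].
    exists (8 * (C + 4)), (D + 1). split; [lra | split; [lra | exact Hf]].
  - intros (I & f & Hf). apply bilipschitz_embedding_iff in Hf as (Hc0 & A & HA & Hf).
    exists (6 * A * A). split; [nra|]. intros R0 HR0.
    pose proof (Delta_c_le_of_moduli d f A 0 HA (Rle_refl 0) Hc0 Hf R0 HR0) as H.
    rewrite Rmult_0_r, Rplus_0_r in H. exact H.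
  - intros (C & HC & HDelta).
    destruct (embedding_of_Delta_c_lt X d Hd (C + 1) 0) as (I & f & Hc0 & Hf); try lra.
    { intros R0 HR0. rewrite Rplus_0_r.
      eapply Rbar_le_lt_trans; [apply HDelta; lra | simpl; lra]. }
    exists I, f. apply bilipschitz_embedding_iff. split; [exact Hc0|].
    exists (8 * (C + 1 + 4)). split; [lra | exact Hf].
Qed.
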